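(* For each $l \in H^*$, the map $\Phi_l = \tau_l \circ \phi^*: R(G/H,1) \to R(G,H)$ is an injective homomorphism of bialgebras (respecting the induction products and restriction coproducts) which sends (classes of) irreducible representations to irreducible representations.
   Context: Let $G$ be a finite abelian group (written additively) and $H \subseteq G$ a subgroup. For $n \ge 1$, $S_n[G] = S_n \ltimes G^n$ is the group of $n \times n$ monomial matrices whose nonzero entries lie in $G$. Let $s: S_n[G] \to G$ be the homomorphism sending a monomial matrix to the sum of its nonzero entries, and let $G_n(G,H) = \{g \in S_n[G] : s(g) \in H\}$. For $n \ge 1$, $R_n(G,H)$ is the Grothendieck group of finite-dimensional complex representations of $G_n(G,H)$, $R_0(G,H) = \mathbb{Z}$, and $R(G,H) = \bigoplus_{n \ge 0} R_n(G,H)$, with graded bilinear form $\langle \cdot,\cdot\rangle$ for which the irreducible classes (and $1 \in R_0$) form an orthonormal basis. Using the block-diagonal embedding $G_k(G,H) \times G_m(G,H) \subseteq G_{k+m}(G,H)$, the product on $R(G,H)$ is induction and the coproduct is restriction. The same construction applied to the pair $(G/H, 1)$ gives $R(G/H,1)$ (here $G_n(G/H,1)$ is the group of monomial matrices with entries in $G/H$ whose entries sum to $0$). A ''bialgebra homomorphism'' means a map respecting product, unit, coproduct and counit. Let $\phi: G_n(G,H) \to G_n(G/H,1)$ be reduction of the matrix entries mod $H$; it is surjective with kernel the diagonal subgroup $H^n$, and $\phi^*: R(G/H,1) \to R(G,H)$ is the graded map induced by pullback of representations along $\phi$. $H^* = \mathrm{Hom}(H, \mathbb{C}^\times)$; for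 $l \in H^*$, $\tau_l$ is the graded operator on $R(G,H)$ induced by tensoring with the linear character $g \mapsto l(s(g))$ of $G_n(G,H)$ (whose restriction to $H^n$ is $l^{\otimes n}$). *)

From HB Require Import structures.
From mathcomp Require Import all_boot all_order all_algebra all_fingroup all_solvable all_field all_character.
Set Implicit Arguments.
Unset Strict Implicit.
Unset Printing Implicit Defensive.
Import GRing.Theory Num.Theory.

(* The finite abelian group G is written MULTIPLICATIVELY: it is the whole of
   a finGroupType [gT] (assumed abelian); "sum of entries" is the product. *)

Section Defs.

Local Open Scope group_scope.

(* Total builders that avoid proof obligations: they return the intended
   object whenever the data is valid (always the case where used below). *)
Definition mkperm (X : finType) (f : X -> X) : {perm X} :=
  odflt 1 (insub [ffun x => f x] : option {perm X}).

Definition mkCF (gT : finGroupType) (B : {group gT}) (f : gT -> algC) : 'CF(B) :=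
  odflt 0%R (insub [ffun x => ((x \in B)%:R * f x)%R] : option 'CF(B)).

Variable T : finGroupType.

(* A monomial n x n matrix with nonzero entries a_i in T and underlying
   permutation s is encoded faithfully as the permutation
   (i, x) |-> (s i, x * a_i) of 'I_n * T. *)
Definition mono_set (n : nat) (K : {set T}) : {set {perm 'I_n * T}} :=
  [set g : {perm 'I_n * T} | [exists s : 'S_n, exists a : {ffun 'I_n -> T},
     [forall p, g p == (s p.1, p.2 * a p.1)] && (\prod_(i < n) a i \in K)]].

(* G_n(T, K) : monomial matrices with entries in T whose entry-"sum" lies in K.
   (mono_set is already a group when T is abelian and K a subgroup.) *)
Definition Gn (n : nat) (K : {set T}) : {group {perm 'I_n * T}} :=
  <<mono_set n K>>%G.

Definition sumE (n : nat) (g : {perm 'I_n * T}) : T :=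
  \prod_(i < n) (g (i, 1)).2.

Definition emb (k m : nat) (x : {perm 'I_k * T}) (y : {perm 'I_m * T})
  : {perm 'I_(k + m) * T} :=
  mkperm (fun p : 'I_(k + m) * T =>
    match split p.1 with
    | inl i => let q := x (i, p.2) in (lshift m q.1, q.2)
    | inr j => let q := y (j, p.2) in (rshift k q.1, q.2)
    end).

Definition blockG (k m : nat) (K : {set T}) : {group {perm 'I_(k + m) * T}} :=
  <<[set emb x y | x in Gn k K, y in Gn m K]>>%G.

(* the product R_k x R_m -> R_(k+m): induction of the external tensor product *)
Definition indProd (k m : nat) (K : {set T})
  (chi : 'CF(Gn k K)) (psi : 'CF(Gn m K)) : 'CF(Gn (k + m) K) :=
  @cfInd _ (Gn (k + m) K) (blockG k m K)
     (mkCF (blockG k m K) (fun g => (\sum_(x in Gn k K) \sum_(y in Gn m K)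
                                      (emb x y == g)%:R * chi x * psi y)%R)).

(* R_k (x) R_m is identified with R(G_k x G_m) (virtual characters of the
   external direct product); the (k,m)-component of the coproduct is
   restriction along the block embedding. *)
Definition resCoprod (k m : nat) (K : {set T}) (f : 'CF(Gn (k + m) K))
  : 'CF(setX (Gn k K) (Gn m K)) :=
  mkCF (setX_group (Gn k K) (Gn m K)) (fun uv => f (emb uv.1 uv.2)).

Definition extTensor (k m : nat) (K : {set T})
  (chi : 'CF(Gn k K)) (psi : 'CF(Gn m K)) : 'CF(setX (Gn k K) (Gn m K)) :=
  mkCF (setX_group (Gn k K) (Gn m K)) (fun uv => (chi uv.1 * psi uv.2)%R).

End Defs.

Section Phi.

Local Open Scope group_scope.

Variables (gT : finGroupType) (H : {group gT}).

(* R_n(G,H) lives in 'CF(GH n), R_n(G/H,1) in 'CF(GQ n) *)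
Definition GH (n : nat) := Gn n (H : {set gT}).
Definition GQ (n : nat) := Gn n (1 : {set coset_of H}).

Definition phiQ (n : nat) (g : {perm 'I_n * gT}) : {perm 'I_n * coset_of H} :=
  mkperm (fun p : 'I_n * coset_of H =>
    ((g (p.1, 1)).1, p.2 * coset H (g (p.1, 1)).2)).

Definition PhiL (l : 'CF(H)) (n : nat) (f : 'CF(GQ n)) : 'CF(GH n) :=
  mkCF (GH n) (fun g => (l (sumE g) * f (phiQ g))%R).

(* Phi_l (x) Phi_l on R_k (x) R_m = R(G_k x G_m): linear extension of
   chi_i (x) chi_j |-> Phi_l chi_i (x) Phi_l chi_j over the basis of
   external tensor products of irreducibles. *)
Definition PhiL2 (l : 'CF(H)) (k m : nat)
  (th : 'CF(setX (GQ k) (GQ m))) : 'CF(setX (GH k) (GH m)) :=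
  (\sum_(i : Iirr (GQ k)) \sum_(j : Iirr (GQ m))
     '[th, extTensor 'chi_i 'chi_j] *: extTensor (PhiL l 'chi_i) (PhiL l 'chi_j))%R.

End Phi.

From HB Require Import structures.
From mathcomp Require Import all_boot all_order all_algebra all_fingroup all_solvable all_field all_character.
From mathcomp Require Import ring.
Set Implicit Arguments.
Unset Strict Implicit.
Unset Printing Implicit Defensive.
Import GRing.Theory Num.Theory.

(** Reduction mod H is a surjective morphism phi : G_n(G,H) -> G_n(G/H,1)
    with kernel H^n, and s : G_n(G,H) -> H is a morphism, so
    Phi_l chi = (l o s) * (chi o phi) is a linear character times an inflated
    character: it is additive, injective (l never vanishes, phi is onto) and
    preserves irreducibility.  The kernel H^n lies in the block subgroup
    G_k x G_m, so inflation commutes with induction from blocks, and l o s is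
    multiplicative on blocks; this gives the product rule.  For the coproduct,
    restriction to blocks commutes with pullback along phi, and what remains
    is the expansion of a class function on G_k x G_m over products of
    irreducibles, i.e. the second orthogonality relation in each factor. *)

Local Open Scope group_scope.

Lemma mkpermE (X : finType) (f : X -> X) : injective f -> mkperm f =1 f.
Proof.
move=> injf x; rewrite /mkperm.
case: insubP => [u _ /= Hu | /negP []]; last first.
  by apply/injectiveP=> a b; rewrite !ffunE; apply: injf.
by rewrite -pvalE Hu ffunE.
Qed.

Lemma mkCFE (gT : finGroupType) (B : {group gT}) (f : gT -> algC) :
  {in B &, forall x y, f (x ^ y) = f x} ->
  forall x, mkCF B f x = ((x \in B)%:R * f x)%R.
Proof.
move=> fJ x; rewrite /mkCF.
case: insubP => [u _ /= Hu | /negP []]; last first.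
  rewrite genGid; apply: intro_class_fun => [y z By Bz | y /negPf-> ].
    by rewrite groupJ // By fJ.
  by rewrite mul0r.
by have := congr1 (fun h : {ffun _} => h x) Hu; rewrite ffunE => <-.
Qed.

Lemma eq_mkCF (gT : finGroupType) (B : {group gT}) (f1 f2 : gT -> algC) :
  {in B, f1 =1 f2} -> mkCF B f1 = mkCF B f2.
Proof.
move=> E; rewrite /mkCF; congr (odflt _ (insub _)); apply/ffunP=> x.
by rewrite !ffunE; case: (boolP (x \in B)) => [/E -> | _]; rewrite ?mul0r.
Qed.

Section BlockEmbedding.
Variables (T : finGroupType) (k m : nat).
Implicit Types (x : {perm 'I_k * T}) (y : {perm 'I_m * T}).

Let split_lshift (i : 'I_k) : split (lshift m i) = inl i.
Proof. exact: (unsplitK (inl i : 'I_k + 'I_m)). Qed.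
Let split_rshift (j : 'I_m) : split (rshift k j) = inr j.
Proof. exact: (unsplitK (inr j : 'I_k + 'I_m)). Qed.

Let emb_fun x y (p : 'I_(k + m) * T) :=
  match split p.1 with
  | inl i => let q := x (i, p.2) in (lshift m q.1, q.2)
  | inr j => let q := y (j, p.2) in (rshift k q.1, q.2)
  end.

Let emb_fun_inj x y : injective (emb_fun x y).
Proof.
move=> [a t] [b u]; rewrite /emb_fun /= -[a]splitK -[b]splitK.
case: (split a) => i; case: (split b) => j; rewrite /= ?split_lshift ?split_rshift.
- by case=> /ord_inj e1 e2; case: (perm_inj (injective_projections _ _ e1 e2)) => -> ->.
- by case=> E _; have := ltn_ord (x (i, t)).1; rewrite E ltnNge leq_addr.
- by case=> E _; have := ltn_ord (x (j, u)).1; rewrite -E ltnNge leq_addr.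
- case=> /addnI/ord_inj e1 e2.
  by case: (perm_inj (injective_projections _ _ e1 e2)) => -> ->.
Qed.

Lemma emb_lshift x y i t :
  emb x y (lshift m i, t) = (lshift m (x (i, t)).1, (x (i, t)).2).
Proof. by rewrite (mkpermE (@emb_fun_inj x y)) /emb_fun /= split_lshift. Qed.

Lemma emb_rshift x y j t :
  emb x y (rshift k j, t) = (rshift k (y (j, t)).1, (y (j, t)).2).
Proof. by rewrite (mkpermE (@emb_fun_inj x y)) /emb_fun /= split_rshift. Qed.

Lemma embM x1 x2 y1 y2 : emb (x1 * x2) (y1 * y2) = emb x1 y1 * emb x2 y2.
Proof.
apply/permP=> [[a t]]; rewrite permM -[a]splitK; case: (split a) => i /=.
  by rewrite !emb_lshift permM -surjective_pairing.
by rewrite !emb_rshift permM -surjective_pairing.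
Qed.

Lemma emb1 : emb (1 : {perm 'I_k * T}) (1 : {perm 'I_m * T}) = 1.
Proof.
apply/permP=> [[a t]]; rewrite perm1 -[a]splitK; case: (split a) => i /=.
  by rewrite emb_lshift perm1.
by rewrite emb_rshift perm1.
Qed.

Lemma embV x y : (emb x y)^-1 = emb x^-1 y^-1.
Proof. by apply/eqP; rewrite eq_invg_mul -embM !mulgV emb1. Qed.

Lemma embJ x y u v : emb x y ^ emb u v = emb (x ^ u) (y ^ v).
Proof. by rewrite /conjg embV !embM. Qed.

Lemma eq_emb x1 x2 y1 y2 : (emb x1 y1 == emb x2 y2) = (x1 == x2) && (y1 == y2).
Proof.
apply/eqP/andP=> [E | [/eqP-> /eqP->] //]; split; apply/eqP/permP=> -[i t].
  have := congr1 (fun g : {perm _} => g (lshift m i, t)) E; rewrite /= !emb_lshift.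
  by case=> /ord_inj e1 e2; exact: injective_projections.
have := congr1 (fun g : {perm _} => g (rshift k i, t)) E; rewrite /= !emb_rshift.
by case=> /addnI/ord_inj e1 e2; exact: injective_projections.
Qed.

End BlockEmbedding.

Section Monomial.
Variable T : finGroupType.
Hypothesis Tab : abelian [set: T].

Lemma mulgC (x y : T) : x * y = y * x.
Proof. exact: (centsP Tab) x (in_setT x) y (in_setT y). Qed.
HB.instance Definition _ := SemiGroup.isCommutativeLaw.Build T (@mul T) mulgC.

(* Row i of the matrix encoded by g has the entry [mono_entry g i] in column
   [mono_perm g i]. *)
Definition mono_perm n (g : {perm 'I_n * T}) (i : 'I_n) := (g (i, 1)).1.
Definition mono_entry n (g : {perm 'I_n * T}) (i : 'I_n) := (g (i, 1)).2.
Definition monomial n (g : {perm 'I_n * T}) :=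
  [forall p, g p == (mono_perm g p.1, p.2 * mono_entry g p.1)].

Definition mono_of n (s : 'I_n -> 'I_n) (a : 'I_n -> T) : {perm 'I_n * T} :=
  mkperm (fun p => (s p.1, p.2 * a p.1)).

Section Degree.
Variable n : nat.
Implicit Types g h : {perm 'I_n * T}.

Lemma monomialP g :
  reflect (forall p, g p = (mono_perm g p.1, p.2 * mono_entry g p.1)) (monomial g).
Proof. by apply: (iffP forallP) => Hg p; [apply/eqP | rewrite Hg]. Qed.

Lemma mono_eq g h : monomial g -> monomial h ->
  mono_perm g =1 mono_perm h -> mono_entry g =1 mono_entry h -> g = h.
Proof.
by move=> /monomialP Mg /monomialP Mh Es Ea; apply/permP=> p; rewrite Mg Mh Es Ea.
Qed.

Lemma mono_perm_inj g : monomial g -> injective (mono_perm g).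
Proof.
move/monomialP=> Mg i j eij.
have : g (j, mono_entry g i * (mono_entry g j)^-1) = g (i, 1).
  by rewrite !Mg /= -mulgA mulVg mulg1 mul1g eij.
by move/perm_inj=> [].
Qed.

Lemma monoME g h : monomial g -> monomial h -> forall p,
  (g * h) p = (mono_perm h (mono_perm g p.1),
               p.2 * (mono_entry g p.1 * mono_entry h (mono_perm g p.1))).
Proof. by move=> /monomialP Mg /monomialP Mh p; rewrite permM Mg Mh /= mulgA. Qed.

Lemma mono_permM g h : monomial g -> monomial h ->
  mono_perm (g * h) =1 mono_perm h \o mono_perm g.
Proof. by move=> Mg Mh i; rewrite /mono_perm monoME. Qed.

Lemma mono_entryM g h : monomial g -> monomial h -> forall i,
  mono_entry (g * h) i = mono_entry g i * mono_entry h (mono_perm g i).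
Proof. by move=> Mg Mh i; rewrite {1}/mono_entry monoME //= mul1g. Qed.

Lemma monomialM g h : monomial g -> monomial h -> monomial (g * h).
Proof.
by move=> Mg Mh; apply/monomialP=> p; rewrite monoME // mono_permM // mono_entryM.
Qed.

Lemma monomial1 : monomial (1 : {perm 'I_n * T}).
Proof. by apply/monomialP=> -[i t]; rewrite /mono_perm /mono_entry !perm1 mulg1. Qed.

Lemma sumEM g h : monomial g -> monomial h -> sumE (g * h) = sumE g * sumE h.
Proof.
move=> Mg Mh; rewrite /sumE -/(mono_entry _ _).
under eq_bigr do rewrite -/(mono_entry _ _) mono_entryM //.
rewrite big_split /=; congr (_ * _).
by rewrite [RHS](reindex_inj (mono_perm_inj Mg)).
Qed.

Lemma sumE1 : sumE (1 : {perm 'I_n * T}) = 1.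
Proof. by rewrite /sumE big1 // => i _; rewrite perm1. Qed.

Section MonoOf.
Variables (s : 'I_n -> 'I_n) (a : 'I_n -> T).
Hypothesis s_inj : injective s.

Lemma mono_ofE p : mono_of s a p = (s p.1, p.2 * a p.1).
Proof.
apply: mkpermE => -[i t] [j u] /= [/s_inj e1 e2].
by rewrite -e1 in e2 *; rewrite (mulIg _ _ _ e2).
Qed.

Lemma mono_perm_of : mono_perm (mono_of s a) =1 s.
Proof. by move=> i; rewrite /mono_perm mono_ofE. Qed.

Lemma mono_entry_of : mono_entry (mono_of s a) =1 a.
Proof. by move=> i; rewrite /mono_entry mono_ofE /= mul1g. Qed.

Lemma monomial_of : monomial (mono_of s a).
Proof. by apply/monomialP=> p; rewrite mono_ofE mono_perm_of mono_entry_of. Qed.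

Lemma sumE_of : sumE (mono_of s a) = \prod_i a i.
Proof. by apply: eq_bigr => i _; rewrite -/(mono_entry _ _) mono_entry_of. Qed.

End MonoOf.

Lemma mono_setE (K : {set T}) :
  mono_set n K = [set g | monomial g && (sumE g \in K)].
Proof.
apply/setP=> g; rewrite !inE; apply/idP/idP.
  case/existsP=> s /existsP[a /andP[/forallP Hg Ka]].
  have Es i : mono_perm g i = s i by rewrite /mono_perm (eqP (Hg (i, 1))).
  have Ea i : mono_entry g i = a i by rewrite /mono_entry (eqP (Hg (i, 1))) /= mul1g.
  apply/andP; split; first by apply/monomialP=> p; rewrite (eqP (Hg p)) Es Ea.
  by rewrite /sumE (eq_bigr _ (fun i _ => Ea i)).
case/andP=> Mg Kg; apply/existsP; exists (mkperm (mono_perm g)).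
apply/existsP; exists [ffun i => mono_entry g i]; apply/andP; split.
  apply/forallP=> p; rewrite mkpermE ?ffunE; last exact: mono_perm_inj.
  by rewrite (monomialP _ Mg).
by rewrite (eq_bigr (mono_entry g)) // => i _; rewrite ffunE.
Qed.

Variable K : {group T}.

Lemma mem_Gn g : (g \in Gn n K) = monomial g && (sumE g \in K).
Proof.
have gr : group_set (mono_set n K).
  apply/group_setP; rewrite mono_setE; split; first by rewrite inE monomial1 sumE1 group1.
  move=> x y; rewrite !inE => /andP[Mx Kx] /andP[My Ky].
  by rewrite monomialM // sumEM // groupM.
by rewrite /Gn /= (gen_set_id gr) mono_setE inE.
Qed.

Lemma Gn_monomial g : g \in Gn n K -> monomial g.
Proof. by rewrite mem_Gn => /andP[]. Qed.

Lemma Gn_sumE g : g \in Gn n K -> sumE g \in K.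
Proof. by rewrite mem_Gn => /andP[]. Qed.

Lemma sumEJ g h : g \in Gn n K -> h \in Gn n K -> sumE (g ^ h) = sumE g.
Proof.
move=> Gg Gh; have Gh' : h^-1 \in Gn n K by rewrite groupV.
have M := Gn_monomial; rewrite /conjg !sumEM ?monomialM ?M //.
by rewrite [sumE g * _]mulgC mulgA -sumEM ?M // mulVg sumE1 mul1g.
Qed.

End Degree.

Section Blocks.
Variables k m : nat.
Implicit Types (x : {perm 'I_k * T}) (y : {perm 'I_m * T}).

Lemma mono_perm_lshift x y i : mono_perm (emb x y) (lshift m i) = lshift m (mono_perm x i).
Proof. by rewrite /mono_perm emb_lshift. Qed.
Lemma mono_perm_rshift x y j : mono_perm (emb x y) (rshift k j) = rshift k (mono_perm y j).
Proof. by rewrite /mono_perm emb_rshift. Qed.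
Lemma mono_entry_lshift x y i : mono_entry (emb x y) (lshift m i) = mono_entry x i.
Proof. by rewrite /mono_entry emb_lshift. Qed.
Lemma mono_entry_rshift x y j : mono_entry (emb x y) (rshift k j) = mono_entry y j.
Proof. by rewrite /mono_entry emb_rshift. Qed.

Lemma monomial_emb x y : monomial x -> monomial y -> monomial (emb x y).
Proof.
move=> /monomialP Mx /monomialP My; apply/monomialP=> -[a t] /=.
rewrite -[a]splitK; case: (split a) => i /=.
  by rewrite emb_lshift mono_perm_lshift mono_entry_lshift Mx.
by rewrite emb_rshift mono_perm_rshift mono_entry_rshift My.
Qed.

Lemma sumE_emb x y : sumE (emb x y) = sumE x * sumE y.
Proof.
rewrite /sumE big_split_ord /=.
by congr (_ * _); apply: eq_bigr => i _; rewrite -!/(mono_entry _ _)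
  ?mono_entry_lshift ?mono_entry_rshift.
Qed.

Variable K : {group T}.

Lemma emb_Gn x y : x \in Gn k K -> y \in Gn m K -> emb x y \in Gn (k + m) K.
Proof.
rewrite !mem_Gn => /andP[Mx Kx] /andP[My Ky].
by rewrite monomial_emb // sumE_emb groupM.
Qed.

Lemma blockGE : blockG k m K = [set emb x y | x in Gn k K, y in Gn m K] :> {set _}.
Proof.
apply: gen_set_id; apply/group_setP; split.
  by apply/imset2P; exists 1 1; rewrite ?group1 ?emb1.
move=> _ _ /imset2P[x1 y1 X1 Y1 ->] /imset2P[x2 y2 X2 Y2 ->].
by apply/imset2P; exists (x1 * x2) (y1 * y2); rewrite ?groupM ?embM.
Qed.

Lemma emb_blockG x y : x \in Gn k K -> y \in Gn m K -> emb x y \in blockG k m K.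
Proof. by move=> Gx Gy; rewrite blockGE; apply/imset2P; exists x y. Qed.

Lemma blockG_sub : blockG k m K \subset Gn (k + m) K.
Proof. by rewrite blockGE; apply/subsetP=> _ /imset2P[x y X Y ->]; apply: emb_Gn. Qed.

End Blocks.
End Monomial.

Section Reduction.
Variables (gT : finGroupType) (H : {group gT}).
Hypothesis Gab : abelian [set: gT].

Lemma norm_abelian (x : gT) : x \in 'N(H).
Proof. exact: subsetP (sub_abelian_norm Gab (subsetT H)) x (in_setT x). Qed.

Lemma quotient_abelian : abelian [set: coset_of H].
Proof.
apply/centsP=> xb _ yb _; rewrite /commute.
by rewrite -(coset_reprK xb) -(coset_reprK yb) -!morphM ?norm_abelian // mulgC.
Qed.

Lemma mem_GQ n (g : {perm 'I_n * coset_of H}) :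
  (g \in GQ H n) = monomial g && (sumE g == 1).
Proof. by rewrite /GQ (mem_Gn quotient_abelian 1%G g) inE. Qed.

Section Degree.
Variable n : nat.
Implicit Types g h : {perm 'I_n * gT}.

Lemma phiQ_mono_of g :
  phiQ H g = mono_of (mono_perm g) (fun i => coset H (mono_entry g i)).
Proof. by []. Qed.

Lemma phiQE g : monomial g -> forall p,
  phiQ H g p = (mono_perm g p.1, p.2 * coset H (mono_entry g p.1)).
Proof. by move=> Mg p; rewrite phiQ_mono_of mono_ofE //; apply: mono_perm_inj. Qed.

Lemma mono_perm_phiQ g : monomial g -> mono_perm (phiQ H g) =1 mono_perm g.
Proof. by move=> Mg i; rewrite /mono_perm phiQE. Qed.

Lemma mono_entry_phiQ g : monomial g ->
  forall i, mono_entry (phiQ H g) i = coset H (mono_entry g i).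
Proof. by move=> Mg i; rewrite /mono_entry phiQE //= mul1g. Qed.

Lemma monomial_phiQ g : monomial g -> monomial (phiQ H g).
Proof. by move=> Mg; rewrite phiQ_mono_of monomial_of //; apply: mono_perm_inj. Qed.

Lemma sumE_phiQ g : monomial g -> sumE (phiQ H g) = coset H (sumE g).
Proof.
move=> Mg; rewrite /sumE (morph_prod (coset_morphism H)) => [|i _]; last first.
  exact: norm_abelian.
by apply: eq_bigr => i _; rewrite -!/(mono_entry _ _) mono_entry_phiQ.
Qed.

Lemma phiQ_GQ g : g \in GH H n -> phiQ H g \in GQ H n.
Proof.
rewrite mem_GQ => Gg; have Mg := Gn_monomial Gab Gg.
by rewrite monomial_phiQ //= sumE_phiQ // coset_id // (Gn_sumE Gab Gg).
Qed.

Lemma phiQ_morphM : {in GH H n &, {morph @phiQ _ H n : x y / x * y}}.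
Proof.
move=> g h Gg Gh; have [Mg Mh] := (Gn_monomial Gab Gg, Gn_monomial Gab Gh).
have Mgh := monomialM Mg Mh.
have [Mqg Mqh] := (monomial_phiQ Mg, monomial_phiQ Mh).
apply: mono_eq; rewrite ?monomial_phiQ ?monomialM //.
  by move=> i; rewrite mono_permM //= !mono_perm_phiQ // mono_permM.
move=> i; rewrite mono_entryM // !mono_entry_phiQ // mono_perm_phiQ //.
by rewrite mono_entryM // morphM ?norm_abelian.
Qed.

Canonical phiM := Morphism phiQ_morphM.

Lemma phiQ_lift q : q \in GQ H n -> exists2 g, g \in GH H n & phiQ H g = q.
Proof.
rewrite mem_GQ => /andP[Mq /eqP Sq]; have s_inj := mono_perm_inj Mq.
pose g := mono_of (mono_perm q) (fun i => repr (mono_entry q i)).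
have Mg : monomial g by apply: monomial_of.
exists g.
  rewrite (mem_Gn Gab) Mg sumE_of //=; apply: coset_idr; first exact: norm_abelian.
  rewrite (morph_prod (coset_morphism H)) => [|i _]; last exact: norm_abelian.
  by rewrite -[RHS]Sq; apply: eq_bigr => i _ /=; rewrite coset_reprK.
apply: mono_eq; rewrite ?monomial_phiQ //.
  by move=> i; rewrite mono_perm_phiQ // mono_perm_of.
by move=> i; rewrite mono_entry_phiQ // mono_entry_of // coset_reprK.
Qed.

Lemma phiM_im : phiM @* GH H n = GQ H n.
Proof.
apply/setP=> q; apply/idP/idP; first by case/morphimP=> g _ Gg ->; apply: phiQ_GQ.
by case/phiQ_lift=> g Gg <-; apply: mem_morphim.
Qed.

Lemma sumE_morphM : {in GH H n &, {morph @sumE gT n : x y / x * y}}.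
Proof.
by move=> g h Gg Gh; rewrite (sumEM Gab (Gn_monomial Gab Gg) (Gn_monomial Gab Gh)).
Qed.

Canonical sumM := Morphism sumE_morphM.

Lemma sumM_im : sumM @* GH H n \subset H.
Proof. by apply/subsetP=> _ /morphimP[g _ Gg ->]; apply: (Gn_sumE Gab). Qed.

End Degree.

Section Blocks.
Variables k m : nat.

Lemma phiQ_emb (x : {perm 'I_k * gT}) (y : {perm 'I_m * gT}) :
  monomial x -> monomial y -> phiQ H (emb x y) = emb (phiQ H x) (phiQ H y).
Proof.
move=> Mx My; have Mxy := monomial_emb Mx My.
apply: mono_eq; rewrite ?monomial_phiQ ?monomial_emb ?monomial_phiQ //.
  move=> i; rewrite mono_perm_phiQ // -[i]splitK; case: (split i) => j /=.
    by rewrite !mono_perm_lshift mono_perm_phiQ.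
  by rewrite !mono_perm_rshift mono_perm_phiQ.
move=> i; rewrite mono_entry_phiQ // -[i]splitK; case: (split i) => j /=.
  by rewrite !mono_entry_lshift mono_entry_phiQ.
by rewrite !mono_entry_rshift mono_entry_phiQ.
Qed.

(* The kernel of reduction is the diagonal subgroup H^n, which is made of blocks. *)
Lemma ker_phiM_block : 'ker (phiM (k + m)) \subset blockG k m H.
Proof.
apply/subsetP=> g /setIP[Gg]; rewrite !inE /= => /eqP g1.
have Mg := Gn_monomial Gab Gg.
have Es i : mono_perm g i = i.
  by rewrite -(mono_perm_phiQ Mg) g1 /mono_perm perm1.
have Ea i : mono_entry g i \in H.
  apply: coset_idr; first exact: norm_abelian.
  by rewrite -(mono_entry_phiQ Mg) g1 /mono_entry perm1.
pose x := mono_of id (fun i : 'I_k => mono_entry g (lshift m i)).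
pose y := mono_of id (fun j : 'I_m => mono_entry g (rshift k j)).
have Mx : monomial x by apply: monomial_of.
have My : monomial y by apply: monomial_of.
have -> : g = emb x y.
  apply: mono_eq; rewrite ?monomial_emb //.
    move=> i; rewrite Es -[i]splitK; case: (split i) => j /=.
      by rewrite mono_perm_lshift mono_perm_of.
    by rewrite mono_perm_rshift mono_perm_of.
  move=> i; rewrite -[i]splitK; case: (split i) => j /=.
    by rewrite mono_entry_lshift mono_entry_of.
  by rewrite mono_entry_rshift mono_entry_of.
by apply: emb_blockG; rewrite (mem_Gn Gab) ?Mx ?My sumE_of //; apply: group_prod.
Qed.

Lemma phiM_block : phiM (k + m) @* blockG k m H = blockG k m (1 : {set coset_of H}).
Proof.
rewrite (blockGE k m 1%G); apply/setP=> q; apply/idP/idP.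
  case/morphimP=> g _; rewrite blockGE => /imset2P[x y Gx Gy ->] ->.
  apply/imset2P; exists (phiQ H x) (phiQ H y); try exact: phiQ_GQ.
  by rewrite /= phiQ_emb // (Gn_monomial Gab Gx, Gn_monomial Gab Gy).
case/imset2P=> _ _ /phiQ_lift[x Gx <-] /phiQ_lift[y Gy <-] ->.
rewrite -phiQ_emb ?(Gn_monomial Gab Gx, Gn_monomial Gab Gy) //.
by apply: (mem_morphim (phiM (k + m))); [apply: emb_Gn | apply: emb_blockG].
Qed.

End Blocks.
End Reduction.

Section ExternalProduct.
Local Open Scope ring_scope.
Variables (T1 T2 : finGroupType) (A : {group T1}) (B : {group T2}).

Definition cfXprod (chi : 'CF(A)) (psi : 'CF(B)) : 'CF(setX A B) :=
  mkCF (setX_group A B) (fun uv => chi uv.1 * psi uv.2).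

Lemma cfXprodE chi psi u v : (u \in A)%g -> (v \in B)%g ->
  cfXprod chi psi (u, v) = chi u * psi v.
Proof.
move=> Au Bv; rewrite mkCFE; last first.
  by move=> [x y] [g h] /setXP[Ax By] /setXP[Ag Bh] /=; rewrite !cfunJ.
by rewrite in_setX Au Bv mul1r.
Qed.

Lemma sum_class (gT : finGroupType) (G : {group gT}) (f : gT -> algC) (a : gT) :
  (a \in G)%g -> {in G, forall g x, f (x ^ g)%g = f x} ->
  \sum_(c in G) f c * (#|'C_G[a]%g|%:R *+ (a \in (c ^: G)%g)) = #|G|%:R * f a.
Proof.
move=> Ga fJ; under eq_bigr do rewrite mulrnAr mulrb.
rewrite -big_mkcondr /= (eq_bigl (mem (a ^: G)%g)) => [|c]; last first.
  rewrite class_sym; apply/andP/idP => [[] //| Ac]; split=> //.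
  exact: (subsetP (class_subG Ga (subxx G))).
rewrite (eq_bigr (fun _ => f a * #|'C_G[a]%g|%:R)) => [|_ /imsetP[g Gg ->]]; last first.
  by rewrite fJ.
by rewrite sumr_const -index_cent1 -mulrnAr -mulr_natr -natrM Lagrange ?subsetIl // mulrC.
Qed.

(* Second orthogonality in A and in B: the products of irreducibles form a
   basis of 'CF(A x B) dual to itself for the inner product. *)
Lemma cfXprod_expand (th : 'CF(setX A B)) a b : (a \in A)%g -> (b \in B)%g ->
  \sum_(i : Iirr A) \sum_(j : Iirr B) '[th, cfXprod 'chi_i 'chi_j] * ('chi_i a * 'chi_j b)
  = th (a, b).
Proof.
move=> Aa Bb.
pose Psi := \sum_(i : Iirr A) \sum_(j : Iirr B)
  ('chi_i a * 'chi_j b)^* *: cfXprod 'chi_i 'chi_j.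
transitivity '[th, Psi].
  rewrite cfdot_sumr; apply: eq_bigr => i _; rewrite cfdot_sumr; apply: eq_bigr => j _.
  by rewrite cfdotZr conjCK mulrC.
have PsiE c d : (c \in A)%g -> (d \in B)%g -> (Psi (c, d))^* =
    (#|'C_A[a]%g|%:R *+ (a \in (c ^: A)%g)) * (#|'C_B[b]%g|%:R *+ (b \in (d ^: B)%g)).
  move=> Ac Bd; rewrite -!second_orthogonality_relation // mulr_suml.
  rewrite sum_cfunE rmorph_sum; apply: eq_bigr => i _.
  rewrite sum_cfunE rmorph_sum mulr_sumr; apply: eq_bigr => j _.
  by rewrite cfunE cfXprodE // !rmorphM /= !conjCK; ring.
have thJ1 c : {in B, forall g x, th (c, x ^ g)%g = th (c, x)}.
  move=> g Bg x; rewrite -[c in LHS]conjg1.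
  by apply: (@cfunJ _ _ th (c, x) (1, g)%g); rewrite in_setX group1 Bg.
have thJ2 : {in A, forall g x, th (x ^ g, b)%g = th (x, b)}.
  move=> g Ag x; rewrite -[b in LHS]conjg1.
  by apply: (@cfunJ _ _ th (x, b) (g, 1)%g); rewrite in_setX group1 Ag.
have sumX (F : T1 * T2 -> algC) :
    \sum_(z in setX A B) F z = \sum_(c in A) \sum_(d in B) F (c, d).
  rewrite (pair_big_dep _ _ (fun c d => F (c, d))) /=.
  by apply: eq_big => -[c d] //; rewrite /= in_setX.
rewrite cfdotE sumX.
rewrite (eq_bigr (fun c => #|B|%:R * th (c, b) * (#|'C_A[a]%g|%:R *+ (a \in (c ^: A)%g))));
  last first.
  move=> c Ac; rewrite -(@sum_class _ B (fun d => th (c, d)) b Bb (thJ1 c)) mulr_suml.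
  by apply: eq_bigr => d Bd; rewrite PsiE //; ring.
rewrite (@sum_class _ A (fun c => #|B|%:R * th (c, b)) a Aa); last first.
  by move=> g Ag x; rewrite thJ2.
rewrite mulrA -natrM -cardsX mulrA mulVf ?mul1r //.
by rewrite pnatr_eq0 -lt0n cardG_gt0.
Qed.

End ExternalProduct.

Section BlockCharacters.
Local Open Scope ring_scope.
Variables (T : finGroupType) (k m : nat) (K : {group T}).

Section IndProdArgument.
Variables (chi : 'CF(Gn k K)) (psi : 'CF(Gn m K)).

Definition block_sum (g : {perm 'I_(k + m) * T}) :=
  \sum_(x in Gn k K) \sum_(y in Gn m K) (emb x y == g)%:R * chi x * psi y.

Lemma block_sum_emb x0 y0 : (x0 \in Gn k K)%g -> (y0 \in Gn m K)%g ->
  block_sum (emb x0 y0) = chi x0 * psi y0.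
Proof.
move=> Gx0 Gy0; rewrite /block_sum (bigD1 x0) //=.
rewrite [X in _ + X]big1 => [|x /andP[_ /negPf nx]]; last first.
  by apply: big1 => y _; rewrite eq_emb nx !mul0r.
rewrite addr0 (bigD1 y0) //= [X in _ + X]big1 => [|y /andP[_ /negPf ny]]; last first.
  by rewrite eq_emb eqxx ny !mul0r.
by rewrite eq_emb !eqxx mul1r addr0.
Qed.

Lemma mkCF_block_sum_emb x0 y0 : (x0 \in Gn k K)%g -> (y0 \in Gn m K)%g ->
  mkCF (blockG k m K) block_sum (emb x0 y0) = chi x0 * psi y0.
Proof.
move=> Gx0 Gy0; rewrite mkCFE; last first.
  move=> g h; rewrite blockGE => /imset2P[x y Gx Gy ->] /imset2P[u v Gu Gv ->].
  by rewrite embJ !block_sum_emb ?groupJ // !cfunJ.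
by rewrite emb_blockG // mul1r block_sum_emb.
Qed.

End IndProdArgument.

Hypothesis Tab : abelian [set: T].

Lemma resCoprodE (f : 'CF(Gn (k + m) K)) u v :
  (u \in Gn k K)%g -> (v \in Gn m K)%g -> resCoprod f (u, v) = f (emb u v).
Proof.
move=> Gu Gv; rewrite mkCFE; last first.
  move=> [x y] [g h] /setXP[Gx Gy] /setXP[Gg Gh] /=.
  by rewrite -embJ cfunJ // emb_Gn.
by rewrite in_setX Gu Gv mul1r.
Qed.

End BlockCharacters.

Section PhiL.
Local Open Scope ring_scope.
Variables (gT : finGroupType) (H : {group gT}).
Hypothesis Gab : abelian [set: gT].
Variable l : 'CF(H).
Hypothesis Hl : l \is a linear_char.

Lemma PhiL_class n (B : {group {perm 'I_n * gT}}) (Q : {group {perm 'I_n * coset_of H}})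
    (f : 'CF(Q)) :
  (B \subset GH H n)%g -> (phiM H Gab n @* B \subset Q)%g ->
  {in B &, forall x y, l (sumE (x ^ y)%g) * f (phiQ H (x ^ y)%g) =
                       l (sumE x) * f (phiQ H x)}.
Proof.
move=> sBG sQ g h Bg Bh; have [Gg Gh] := (subsetP sBG g Bg, subsetP sBG h Bh).
rewrite (sumEJ Gab Gg Gh).
have -> : phiQ H (g ^ h)%g = (phiM H Gab n g ^ phiM H Gab n h)%g by rewrite -morphJ.
by rewrite cfunJ //; apply: (subsetP sQ); apply: mem_morphim.
Qed.

Lemma PhiLE n (f : 'CF(GQ H n)) g :
  PhiL l f g = (g \in GH H n)%:R * (l (sumE g) * f (phiQ H g)).
Proof. by apply: mkCFE; apply: PhiL_class; rewrite ?phiM_im. Qed.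

Section Degree.
Variable n : nat.

Definition lsum : 'CF(GH H n) := cfMorph ('Res[sumM H Gab n @* GH H n] l).

Lemma lsum_lin : lsum \is a linear_char.
Proof. exact: cfMorph_lin_char (cfRes_lin_char _ Hl). Qed.

Lemma lsumE g : (g \in GH H n)%g -> lsum g = l (sumE g).
Proof.
move=> Gg; rewrite /lsum cfMorphE // cfResE //; first exact: sumM_im.
exact: (mem_morphim (sumM H Gab n)).
Qed.

Lemma GQ_im : (phiM H Gab n @* GH H n)%G = GQ H n.
Proof. by apply: val_inj; rewrite /= phiM_im. Qed.

Lemma mkCF_PhiL (f : 'CF(phiM H Gab n @* GH H n)) :
  mkCF (GH H n) (fun g => l (sumE g) * f (phiQ H g)) = lsum * cfMorph f.
Proof.
apply/cfun_inP=> g Gg; rewrite mkCFE; last exact: PhiL_class.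
by rewrite Gg mul1r cfunE lsumE // cfMorphE.
Qed.

Lemma PhiL_irr (i : Iirr (GQ H n)) : PhiL l 'chi_i \in irr (GH H n).
Proof.
rewrite /PhiL; case: (GQ H n) / GQ_im i => i.
by rewrite mkCF_PhiL mul_lin_irr ?lsum_lin ?cfMorph_irr ?mem_irr.
Qed.

Lemma PhiL_add (x y : 'CF(GQ H n)) : PhiL l (x + y) = PhiL l x + PhiL l y.
Proof. by apply/cfunP=> g; rewrite cfunE !PhiLE cfunE; ring. Qed.

Lemma PhiL_vchar (x : 'CF(GQ H n)) :
  x \in 'Z[irr (GQ H n)]%g -> PhiL l x \in 'Z[irr (GH H n)]%g.
Proof.
move=> Zx; have PhiL_sum (c : Iirr (GQ H n) -> algC) :
    PhiL l (\sum_i c i *: 'chi_i) = \sum_i c i *: PhiL l 'chi_i.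
  apply/cfunP=> g; rewrite PhiLE !sum_cfunE mulr_sumr mulr_sumr.
  by apply: eq_bigr => i _; rewrite !cfunE PhiLE; ring.
rewrite (cfun_sum_cfdot x) PhiL_sum; apply: rpred_sum => i _.
apply: rpredZ_int; first exact: Cint_cfdot_vchar_irr.
by case/irrP: (PhiL_irr i) => j ->; apply: irr_vchar.
Qed.

(* l never vanishes and reduction is onto. *)
Lemma PhiL_inj : injective (@PhiL _ H l n).
Proof.
move=> x y E; apply/cfun_inP=> q /(phiQ_lift Gab)[g Gg <-].
have := congr1 (fun f : 'CF(GH H n) => f g) E; rewrite /= !PhiLE Gg !mul1r.
by apply: mulfI; apply: (lin_char_neq0 Hl); apply: (Gn_sumE Gab Gg).
Qed.

Lemma PhiL_1g (x : 'CF(GQ H n)) : PhiL l x 1%g = x 1%g.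
Proof.
rewrite PhiLE group1 mul1r sumE1 (lin_char1 Hl) mul1r.
by have := morph1 (phiM H Gab n) => /= ->.
Qed.

End Degree.

Lemma PhiL_unit : PhiL l (1 : 'CF(GQ H 0)) = 1.
Proof.
apply/cfun_inP=> g Gg; rewrite PhiLE Gg mul1r cfun1E Gg cfun1E (phiQ_GQ Gab Gg).
by rewrite /sumE big_ord0 (lin_char1 Hl) !mulr1.
Qed.

Section Product.
Variables k m : nat.
Local Notation N := (k + m)%N.

(* Inflation commutes with induction from blocks since the kernel H^N lies in
   the blocks, and multiplication by the linear character l o s commutes with
   induction. *)
Lemma PhiL_Ind (Q B : {group {perm 'I_N * coset_of H}})
    (EQ : (phiM H Gab N @* GH H N)%G = Q) (EB : (phiM H Gab N @* blockG k m H)%G = B)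
    (th : 'CF(B)) :
  mkCF (GH H N) (fun g => l (sumE g) * ('Ind[Q] th) (phiQ H g)) =
  'Ind[GH H N] (mkCF (blockG k m H) (fun b => l (sumE b) * th (phiQ H b))).
Proof.
have sBG := blockG_sub Gab k m H.
subst Q B; rewrite mkCF_PhiL -cfIndMorph ?ker_phiM_block // mulrC -cfIndM //.
congr ('Ind _); apply/cfun_inP=> b Bb; have Gb := subsetP sBG b Bb.
rewrite mkCFE; last by apply: PhiL_class.
by rewrite Bb mul1r cfunE cfResE // lsumE // cfMorphE // mulrC.
Qed.

Lemma PhiL_prod (x : 'CF(GQ H k)) (y : 'CF(GQ H m)) :
  PhiL l (indProd x y) = indProd (PhiL l x) (PhiL l y).
Proof.
have EB : (phiM H Gab N @* blockG k m H)%G = blockG k m (1%g : {set coset_of H}).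
  by apply: val_inj; rewrite /= phiM_block.
rewrite /indProd [LHS](PhiL_Ind (GQ_im N) EB); congr ('Ind _).
apply: eq_mkCF => b; rewrite blockGE => /imset2P[u v Gu Gv ->].
have [Mu Mv] := (Gn_monomial Gab Gu, Gn_monomial Gab Gv).
rewrite -/(block_sum _ _ _) block_sum_emb // phiQ_emb // -/(block_sum _ _ _).
rewrite mkCF_block_sum_emb ?phiQ_GQ // !PhiLE Gu Gv !mul1r.
by rewrite sumE_emb (lin_charM Hl (Gn_sumE Gab Gu) (Gn_sumE Gab Gv)); ring.
Qed.

End Product.

Lemma PhiL_coprod k m (x : 'CF(GQ H (k + m))) :
  resCoprod (PhiL l x) = PhiL2 l (resCoprod x).
Proof.
apply/cfun_inP=> -[u v] /setXP[Gu Gv].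
have [Mu Mv] := (Gn_monomial Gab Gu, Gn_monomial Gab Gv).
have [qGu qGv] := (phiQ_GQ Gab Gu, phiQ_GQ Gab Gv).
rewrite resCoprodE // PhiLE emb_Gn // mul1r sumE_emb.
rewrite (lin_charM Hl (Gn_sumE Gab Gu) (Gn_sumE Gab Gv)) phiQ_emb //.
rewrite -(resCoprodE (quotient_abelian H Gab) x qGu qGv).
rewrite -(cfXprod_expand (resCoprod x) qGu qGv).
rewrite /PhiL2 sum_cfunE mulr_sumr; apply: eq_bigr => i _.
rewrite sum_cfunE mulr_sumr; apply: eq_bigr => j _.
by rewrite cfunE cfXprodE // !PhiLE Gu Gv !mul1r; ring.
Qed.

End PhiL.

Local Close Scope group_scope.

Theorem proposition1 (gT : finGroupType) (H : {group gT})
  (Gab : abelian [set: gT]) (l : 'CF(H)) (Hl : (l \is a linear_char)%R) : (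
  (* Z-linear map R_n(G/H,1) -> R_n(G,H) in each degree *)
  (forall n (x y : 'CF(GQ H n)), x \in ('Z[irr (GQ H n)])%g -> y \in ('Z[irr (GQ H n)])%g ->
      PhiL l (x + y) = (PhiL l x + PhiL l y)%R)
  /\ (forall n (x : 'CF(GQ H n)), x \in ('Z[irr (GQ H n)])%g ->
      PhiL l x \in ('Z[irr (GH H n)])%g)
  /\ (forall n (x y : 'CF(GQ H n)), x \in ('Z[irr (GQ H n)])%g -> y \in ('Z[irr (GQ H n)])%g ->
      PhiL l x = PhiL l y -> x = y)
  /\ (forall k m (x : 'CF(GQ H k)) (y : 'CF(GQ H m)),
      x \in ('Z[irr (GQ H k)])%g -> y \in ('Z[irr (GQ H m)])%g ->
      PhiL l (indProd x y) = indProd (PhiL l x) (PhiL l y))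
  /\ PhiL l (1%R : 'CF(GQ H 0)) = 1%R
  /\ (forall k m (x : 'CF(GQ H (k + m))), x \in ('Z[irr (GQ H (k + m))])%g ->
      resCoprod (PhiL l x) = PhiL2 l (resCoprod x))
  (* respects the counit (projection onto R_0 = Z, read off at the identity) *)
  /\ (forall x : 'CF(GQ H 0), x \in ('Z[irr (GQ H 0)])%g ->
      PhiL l x 1%g = x 1%g)
  /\ (forall n (i : Iirr (GQ H n)), PhiL l 'chi_i \in irr (GH H n)))%R.
Proof.
split; first by move=> n x y _ _; apply: PhiL_add.
split; first by move=> n x; apply: PhiL_vchar.
split; first by move=> n x y _ _; apply: (PhiL_inj Gab Hl).
split; first by move=> k m x y _ _; apply: PhiL_prod.
split; first exact: PhiL_unit.
split; first by move=> k m x _; apply: PhiL_coprod.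
split; first by move=> x _; apply: PhiL_1g.
by move=> n i; apply: PhiL_irr.
Qed.
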